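(* Let $G$ be a group and let $k\ge 0$ be an integer. The core quandle $Core(G)$ is $(2k+1)$-stable if and only if every element of $G$ satisfies $g^2=1$; in other words, $G$ is isomorphic to $\bigoplus_{i\in I}\mathbb{Z}_2$ for some (finite or infinite) set $I$.
   Context: The core quandle $Core(G)$ of a group $G$ is the set $G$ with operation $g\rhd h:=hg^{-1}h$. For elements $u_1,\ldots,u_n$ of a rack $X$ write $x\rhd(u_i)_{i=1}^n:=(\cdots((x\rhd u_1)\rhd u_2)\cdots)\rhd u_n$. A stabilizing family of order $n$ for $X$ is a finite family $(u_1,\ldots,u_n)$ of elements of $X$ such that $x\rhd(u_i)_{i=1}^n=x$ for all $x\in X$; $X$ is $n$-stable if it has a stabilizing family of order $n$. *)

From Stdlib Require Import List.
Import ListNotations.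

Record is_group {G : Type} (mul : G -> G -> G) (one : G) (inv : G -> G) : Prop := {
  grp_assoc : forall x y z, mul x (mul y z) = mul (mul x y) z;
  grp_mul1l : forall x, mul one x = x;
  grp_mul1r : forall x, mul x one = x;
  grp_mulVl : forall x, mul (inv x) x = one;
  grp_mulVr : forall x, mul x (inv x) = one
}.

Definition core_op {G : Type} (mul : G -> G -> G) (inv : G -> G) (g h : G) : G :=
  mul (mul h (inv g)) h.

Definition rack_act_seq {X : Type} (op : X -> X -> X) (x : X) (us : list X) : X :=
  fold_left op us x.

Definition stabilizing_family {X : Type} (op : X -> X -> X) (n : nat) (us : list X) : Prop :=
  length us = n /\ forall x : X, rack_act_seq op x us = x.

Definition n_stable {X : Type} (op : X -> X -> X) (n : nat) : Prop :=
  exists us : list X, stabilizing_family op n us.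

(* Acting on [Core(G)] by a family [u_1, ..., u_n] is the map
   [x |-> A x^(+-1) B] with exponent [(-1)^n], since [x |> u = u x^-1 u].
   For odd [n] a stabilizing family thus gives [A x^-1 B = x] for all [x].
   Taking [x = 1] gives [B = A^-1], so inversion is conjugation by [A]: it is
   then both an automorphism and an anti-automorphism, which forces [G] to be
   abelian, and then [x^-1 = A^-1 x A = x].  Conversely, if every element is
   an involution then [x |> 1 = x^-1 = x], so [1, ..., 1] stabilizes. *)
From Stdlib Require Import List Arith.

Set Implicit Arguments.

Section CoreQuandle.

Variables (G : Type) (mul : G -> G -> G) (one : G) (inv : G -> G).
Hypothesis HG : is_group mul one inv.

Local Notation core := (core_op mul inv).

Let mulA := grp_assoc _ _ _ HG.
Let mul1g := grp_mul1l _ _ _ HG.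
Let mulg1 := grp_mul1r _ _ _ HG.
Let mulVg := grp_mulVl _ _ _ HG.
Let mulgV := grp_mulVr _ _ _ HG.

Lemma inv_unique a b : mul a b = one -> b = inv a.
Proof.
  intros Hab.
  rewrite <- (mul1g b), <- (mulVg a).
  rewrite <- mulA, Hab, mulg1. reflexivity.
Qed.

Lemma inv_inv a : inv (inv a) = a.
Proof. symmetry. apply inv_unique, mulVg. Qed.

Lemma inv_one : inv one = one.
Proof. symmetry. apply inv_unique, mul1g. Qed.

Lemma inv_mul a b : inv (mul a b) = mul (inv b) (inv a).
Proof.
  symmetry. apply inv_unique.
  rewrite mulA, <- (mulA a b), mulgV, mulg1, mulgV. reflexivity.
Qed.

Lemma mul_cancel_l a b c : mul a b = mul a c -> b = c.
Proof.
  intros Habc.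
  rewrite <- (mul1g b), <- (mul1g c).
  rewrite <- (mulVg a), <- !mulA, Habc. reflexivity.
Qed.

Lemma core_act_seq_affine (us : list G) :
  exists A B, forall x,
    rack_act_seq core x us =
    mul (mul A (if Nat.even (length us) then x else inv x)) B.
Proof.
  unfold rack_act_seq.
  induction us as [|u l [A [B IH]]].
  - exists one, one. intros x. cbn.
    rewrite mul1g, mulg1. reflexivity.
  - cbn [length fold_left]. rewrite Nat.even_succ, <- Nat.negb_even.
    destruct (Nat.even (length l)); cbn [negb].
    + exists (mul A u), (mul u B). intros x.
      rewrite IH. unfold core_op. rewrite !mulA. reflexivity.
    + exists (mul A (inv u)), (mul (inv u) B). intros x.
      rewrite IH. unfold core_op. rewrite !inv_mul, inv_inv, !mulA.
      reflexivity.
Qed.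

Lemma stable_odd_inv_affine n :
  Nat.even n = false -> n_stable core n ->
  exists A B, forall x, mul (mul A (inv x)) B = x.
Proof.
  intros Hodd [us [Hlen Hstab]].
  destruct (core_act_seq_affine us) as [A [B Hact]].
  exists A, B. intros x.
  specialize (Hstab x). rewrite Hact, Hlen, Hodd in Hstab. exact Hstab.
Qed.

Lemma inv_affine_involutive A B :
  (forall x, mul (mul A (inv x)) B = x) -> forall g, mul g g = one.
Proof.
  intros Haff.
  assert (HB : B = inv A).
  { apply inv_unique. rewrite <- (Haff one) at 1.
    rewrite inv_one, mulg1. reflexivity. }
  subst B.
  assert (Hconj : forall x, inv x = mul (mul (inv A) x) A).
  { intros x. apply (mul_cancel_l (a := A)).
    rewrite !mulA, mulgV, mul1g.
    rewrite <- (Haff x) at 2.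
    rewrite <- mulA, mulVg, mulg1. reflexivity. }
  assert (Hcomm : forall x y, mul x y = mul y x).
  { intros x y.
    assert (Hinv : inv (mul y x) = inv (mul x y)).
    { rewrite inv_mul, (Hconj (mul x y)), (Hconj x), (Hconj y), <- !mulA.
      rewrite (mulA A), mulgV, mul1g. reflexivity. }
    rewrite <- (inv_inv (mul x y)), <- Hinv, inv_inv. reflexivity. }
  intros g.
  assert (Hg : inv g = g).
  { rewrite Hconj, (Hcomm (inv A) g), <- mulA, mulVg.
    apply mulg1. }
  rewrite <- Hg at 2. apply mulgV.
Qed.

Lemma involutive_stable n : (forall g, mul g g = one) -> n_stable core n.
Proof.
  intros Hsq. exists (repeat one n). split; [apply repeat_length|].
  intros x. unfold rack_act_seq.
  induction n as [|n IH]; [reflexivity|]. cbn [repeat fold_left].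
  unfold core_op at 2.
  rewrite mul1g, mulg1, <- (inv_unique (Hsq x)). exact IH.
Qed.

End CoreQuandle.

Theorem mainTheorem2 (G : Type) (mul : G -> G -> G) (one : G) (inv : G -> G)
  (HG : is_group mul one inv) (k : nat) :
  n_stable (core_op mul inv) (2 * k + 1) <-> (forall g : G, mul g g = one).
Proof.
  split.
  - intros Hstab.
    destruct (stable_odd_inv_affine HG (Nat.even_odd k) Hstab) as [A [B Haff]].
    exact (inv_affine_involutive HG A B Haff).
  - apply involutive_stable, HG.
Qed.
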